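(* Let $\mathcal P$ be a family of non-zero real polynomials with no constant term, and let $X\subset\mathbb R$, with $|\mathcal P|<\mathfrak{c}$ and $|X|<\mathfrak{c}$. Then there exists a set $Y=\{y_\xi:\xi<\mathfrak{c}\}\subset\mathbb R$ such that $P(y_{\xi_1},y_{\xi_2},\ldots,y_{\xi_n})\notin X$ for every $n\ge1$, every polynomial $P\in\mathcal P$ in $n$ variables and every choice of pairwise distinct ordinals $\xi_1,\dots,\xi_n<\mathfrak{c}$.
   Context: $\mathfrak{c}$ denotes the cardinality of $\mathbb R$, identified with the first ordinal of that cardinality. *)

From HB Require Import structures.
From mathcomp Require Import all_boot all_order all_algebra.
From mathcomp Require Import reals.
From mathcomp Require Import mpoly.
Set Implicit Arguments. Unset Strict Implicit. Unset Printing Implicit Defensive.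
Import GRing.Theory Num.Theory.
Local Open Scope ring_scope.

Definition lt_continuum (R : realType) (T : Type) (A : T -> Prop) : Prop :=
  ~ (exists f : R -> T, injective f /\ forall r, A (f r)).

Definition anypoly (R : realType) := {n : nat & {mpoly R[n]}}.

(* Call [S] independent over a set [K] of reals when no nonzero polynomial
   with coefficients in [K] vanishes at distinct points of [S].  For [K] take
   the coefficients of the polynomials of the family together with [-X]: it
   has size < c, and any independent set of size c is a suitable [Y], since
   [P - x] is nonzero with coefficients in [K] when [P(0) = 0] and [x \in X].
   A maximal independent set (Zorn) has size c.  Otherwise it could be
   enlarged by a point [t] outside it which is not a root of any nonzero
   univariate polynomial obtained from a polynomial over [K] by substituting
   points of the set for all variables but one; there are fewer than c such
   roots, because finite sequences over a set of size < c are fewer than c,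
   which rests on [|A x A| = |A|] for infinite [A]. *)

From HB Require Import structures.
From mathcomp Require Import all_boot all_order all_algebra.
From mathcomp Require Import reals.
From mathcomp Require Import mpoly.
From mathcomp Require Import boolp classical_sets.
From mathcomp Require polyrcf lebesgue_measure.
Import GRing.Theory Num.Theory.
Set Implicit Arguments. Unset Strict Implicit. Unset Printing Implicit Defensive.
Local Open Scope classical_set_scope.
Local Open Scope ring_scope.

Section PartialFunctions.
Variables X Y : Type.

Definition extends (c c' : set X * (X -> Y)) :=
  (forall x, c.1 x -> c'.1 x) /\ forall x, c.1 x -> c.2 x = c'.2 x.

Lemma chain_glue (y0 : Y) (C : set (set X * (X -> Y))) :
  (forall c c', C c -> C c' -> extends c c' \/ extends c' c) ->
  exists f : X -> Y, forall c x, C c -> c.1 x -> f x = c.2 x.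
Proof.
move=> Ccomp.
exists (fun x => if pselect (exists c, C c /\ c.1 x) is left h
            then (sval (cid h)).2 x else y0).
move=> c x Cc cx; case: pselect => [h|[]]; last by exists c.
case: (cid h) => c' [Cc' c'x] /=.
by case: (Ccomp _ _ Cc Cc') => [[_ e]|[_ e]]; rewrite e.
Qed.

Lemma zorn_partial_fun (y0 : Y) (good : set X -> (X -> Y) -> Prop) D0 f0 :
  good D0 f0 ->
  (forall C : set (set X * (X -> Y)), (exists c, C c) ->
     (forall c, C c -> good c.1 c.2) ->
     (forall c c', C c -> C c' -> extends c c' \/ extends c' c) ->
     forall (D : set X) (f : X -> Y), (forall x, D x <-> exists2 c, C c & c.1 x) ->
       (forall c x, C c -> c.1 x -> f x = c.2 x) -> good D f) ->
  exists D f, good D f /\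
    forall D' f', good D' f' -> extends (D, f) (D', f') -> forall x, D' x -> D x.
Proof.
move=> g0 good_chain.
pose T := {c : set X * (X -> Y) | good c.1 c.2}.
have t0 : T by exists (D0, f0).
pose Rl (a b : T) := `[< extends (sval a) (sval b) >].
have [|||t tmax] := @ZL_preorder T t0 Rl.
- by move=> [c gc]; apply/asboolP; split.
- move=> [a ga] [b gb] [c gc] /asboolP [ab1 ab2] /asboolP [bc1 bc2].
  apply/asboolP; split => /=.
  + by move=> x /ab1 /bc1.
  + by move=> x ax; rewrite ab2 // bc2 //; apply: ab1.
- move=> A Atot.
  have [[a Aa]|A0] := pselect (exists a, A a); last first.
    by exists t0 => s As; exfalso; apply: A0; exists s.
  pose C := fun c => exists2 a, A a & sval a = c.
  pose D := fun x => exists2 c, C c & c.1 x.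
  have Ccomp c c' : C c -> C c' -> extends c c' \/ extends c' c.
    move: c c' => _ _ [a1 A1 <-] [a2 A2 <-].
    by case: (Atot _ _ A1 A2) => /asboolP; [left|right].
  have [f fP] := chain_glue y0 Ccomp.
  have gD : good D f.
    apply: (good_chain C) => //.
    - by exists (sval a); exists a.
    - by move=> _ [b _ <-]; exact: (svalP b).
  exists (exist (fun c => good c.1 c.2) (D, f) gD) => s As.
  apply/asboolP; split => /=.
  + by move=> x sx; exists (sval s) => //; exists s.
  + by move=> x sx; rewrite (fP (sval s)) //; exists s.
- exists (sval t).1, (sval t).2; split; first exact: (svalP t).
  move=> D' f' g' e'.
  have := tmax (exist (fun c => good c.1 c.2) (D', f') g'); rewrite /Rl.
  case: t {tmax} e' => [[D f] gt] /= e' H.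
  by have /asboolP [h _] := H (asboolT e'); apply: h.
Qed.

End PartialFunctions.

Definition injects_into X Y (A : set X) (B : set Y) :=
  exists f : X -> Y, (forall x, A x -> B (f x)) /\
    (forall x x', A x -> A x' -> f x = f x' -> x = x').

Section CardinalComparability.
Variables (X Y : Type) (x0 : X) (y0 : Y) (A : set X) (B : set Y).

Let good (D : set X) (g : X -> Y) :=
  (forall x, D x -> A x) /\ (forall x, D x -> B (g x)) /\
  (forall x x', D x -> D x' -> g x = g x' -> x = x').

Let good_chain (C : set (set X * (X -> Y))) : (exists c, C c) ->
  (forall c, C c -> good c.1 c.2) ->
  (forall c c', C c -> C c' -> extends c c' \/ extends c' c) ->
  forall D f, (forall x, D x <-> exists2 c, C c & c.1 x) ->
    (forall c x, C c -> c.1 x -> f x = c.2 x) -> good D f.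
Proof.
move=> _ Cg Ccomp D f HD Hf; split; [|split].
- by move=> x /HD [c' Cc' c'x]; have [h _] := Cg _ Cc'; exact: h.
- move=> x /HD [c' Cc' c'x]; rewrite (Hf c' x Cc' c'x).
  by have [_ [h _]] := Cg _ Cc'; exact: h.
- move=> x x' /HD [c1 C1 x1] /HD [c2 C2 x2].
  rewrite (Hf _ _ C1 x1) (Hf _ _ C2 x2).
  case: (Ccomp _ _ C1 C2) => [[s1 e1]|[s2 e2]].
  + by rewrite e1 //; have [_ [_ h]] := Cg _ C2; apply: h => //; exact: s1.
  + by rewrite e2 //; have [_ [_ h]] := Cg _ C1; apply: h => //; exact: s2.
Qed.

(* A maximal partial injection [g : D -> B] with [D] in [A] is either defined
   on all of [A] or onto [B]: otherwise a point of [A] outside [D] could be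
   sent to a point of [B] outside the range of [g]. *)
Lemma injects_into_total : injects_into A B \/ injects_into B A.
Proof.
have [|D [g [[DA [gB ginj]] gmax]]] :=
  @zorn_partial_fun X Y y0 good set0 (fun _ => y0) _ good_chain.
- by split => //; split.
- have [AD|nAD] := pselect (forall x, A x -> D x).
    by left; exists g; split => [x /AD /gB|x x' /AD Dx /AD Dx'] //; exact: ginj.
  have [a [Aa Da]] : exists a, A a /\ ~ D a.
    by apply: contra_notP nAD => H x Ax; apply: contra_notP H => nD; exists x.
  have [BD|nBD] := pselect (forall b, B b -> exists2 x, D x & g x = b).
    right; exists (fun b => if pselect (exists2 x, D x & g x = b) is left h
                           then sval (cid2 h) else x0); split.
      move=> b Bb; case: pselect => [h|[]]; last exact: BD.
      by case: (cid2 h) => x Dx _ /=; apply: DA.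
    move=> b b' Bb Bb'; case: pselect => [h|[]]; last exact: BD.
    case: pselect => [h'|[]]; last exact: BD.
    case: (cid2 h) => x Dx gx; case: (cid2 h') => x' Dx' gx' /= exx.
    by rewrite -gx -gx' exx.
  have [b [Bb nb]] : exists b, B b /\ ~ exists2 x, D x & g x = b.
    by apply: contra_notP nBD => H y By; apply: contra_notP H => nD; exists y.
  pose g' x := if pselect (x = a) then b else g x.
  have g'a : g' a = b by rewrite /g'; case: pselect.
  have g'E x : D x -> g' x = g x.
    by move=> Dx; rewrite /g'; case: pselect => // xa; case: Da; rewrite -xa.
  have g'good : good (D `|` [set a]) g'.
    split; [|split].
    - by move=> x [/DA|->].
    - by move=> x [Dx|->]; [rewrite g'E //; apply: gB | rewrite g'a].
    - move=> x x' [Dx|->] [Dx'|->] //.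
      + by rewrite !g'E //; apply: ginj.
      + by rewrite g'E // g'a => gx; case: nb; exists x.
      + by rewrite g'a g'E // => /esym gx; case: nb; exists x'.
  case: (Da); apply: (gmax _ _ g'good); last by right.
  by split => /= [x Dx|x Dx]; [left | rewrite g'E].
Qed.
End CardinalComparability.


Section Pairing.
Variable T : Type.

Definition pairing_on (B : set T) (f : T * T -> T) :=
  (forall x y, B x -> B y -> B (f (x, y))) /\
  (forall x y x' y', B x -> B y -> B x' -> B y' ->
     f (x, y) = f (x', y') -> x = x' /\ y = y').

Lemma injects_into_setU (B C : set T) f b0 b1 :
  pairing_on B f -> B b0 -> B b1 -> b0 <> b1 ->
  injects_into C B -> injects_into (B `|` C) B.
Proof.
move=> [fB finj] Bb0 Bb1 b01 [g [gB ginj]].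
have gC x : (B `|` C) x -> ~ B x -> B (g x) by move=> [|/gB].
exists (fun x => if pselect (B x) then f (b0, x) else f (b1, g x)); split.
  by move=> x BCx; case: pselect => Bx; apply: fB => //; apply: gC.
move=> x x' BCx BCx'; case: pselect => Bx; case: pselect => Bx'.
- by case/(finj _ _ _ _ Bb0 Bx Bb0 Bx').
- by case/(finj _ _ _ _ Bb0 Bx Bb1 (gC _ BCx' Bx')).
- by case/(finj _ _ _ _ Bb1 (gC _ BCx Bx) Bb0 Bx') => /esym.
- case/(finj _ _ _ _ Bb1 (gC _ BCx Bx) Bb1 (gC _ BCx' Bx')) => _.
  by apply: ginj; [case: BCx | case: BCx'].
Qed.

Lemma injects_into_image (B : set T) (h : T -> T) :
  (exists b, B b) -> injects_into (h @` B) B.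
Proof.
move=> [b0 _]; exists (fun w => if pselect ((h @` B) w) is left hw
                             then sval (cid2 hw) else b0); split.
  by move=> w hw; case: pselect => // hw'; case: (cid2 hw').
move=> w w' hw hw'; do 2 case: pselect => // ?.
case: cid2 => x Bx hx; case: cid2 => x' Bx' hx' /= exx.
by rewrite -hx -hx' exx.
Qed.

Lemma pairing_on_extend (B : set T) f h b0 b1 :
  pairing_on B f -> B b0 -> B b1 -> b0 <> b1 ->
  (forall x, B x -> ~ B (h x)) ->
  (forall x x', B x -> B x' -> h x = h x' -> x = x') ->
  exists f', pairing_on (B `|` h @` B) f' /\
    forall x y, B x -> B y -> f' (x, y) = f (x, y).
Proof.
move=> fP Bb0 Bb1 b01 hB hinj.
have [s [sB sinj]] : injects_into (B `|` h @` B) B.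
  exact: injects_into_setU fP Bb0 Bb1 b01 (injects_into_image _ (ex_intro _ _ Bb0)).
have [fB finj] := fP.
have fsB x y : (B `|` h @` B) x -> (B `|` h @` B) y -> B (f (s x, s y)).
  by move=> BCx BCy; apply: fB; apply: sB.
(* New pairs are sent outside [B], so they cannot collide with old ones. *)
pose f' z := if pselect (B z.1 /\ B z.2) then f z else h (f (s z.1, s z.2)).
have f'E x y : B x -> B y -> f' (x, y) = f (x, y).
  by move=> Bx By; rewrite /f'; case: pselect => // -[]; split.
have f'N x y : ~ (B x /\ B y) -> f' (x, y) = h (f (s x, s y)).
  by rewrite /f'; case: pselect.
exists f'; split => //.
split=> [x y BCx BCy|x y x' y' BCx BCy BCx' BCy'].
  have [[Bx By]|nB] := pselect (B x /\ B y); first by rewrite f'E //; left; apply: fB.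
  by rewrite f'N //; right; exists (f (s x, s y)) => //; apply: fsB.
have [[Bx By]|nB] := pselect (B x /\ B y);
  have [[Bx' By']|nB'] := pselect (B x' /\ B y').
- by rewrite !f'E //; apply: finj.
- rewrite f'E // f'N // => e.
  by case: (hB _ (fsB _ _ BCx' BCy')); rewrite -e; apply: fB.
- rewrite f'N // f'E // => e.
  by case: (hB _ (fsB _ _ BCx BCy)); rewrite e; apply: fB.
- rewrite !f'N // => /(hinj _ _ (fsB _ _ BCx BCy) (fsB _ _ BCx' BCy')).
  case/(finj _ _ _ _ (sB _ BCx) (sB _ BCy) (sB _ BCx') (sB _ BCy')).
  by move=> /(sinj _ _ BCx BCx') -> /(sinj _ _ BCy BCy') ->.
Qed.

End Pairing.

Section NatInjSqrInj.
Variables (T : Type) (e : nat -> T).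
Hypothesis einj : injective e.

(* Zorn is applied to partial pairing functions whose domain is a square [B x B]
   with [B] read off the diagonal. *)
Let diag (D : set (T * T)) x := D (x, x).

Let good (D : set (T * T)) (f : T * T -> T) :=
  [/\ forall z, D z <-> diag D z.1 /\ diag D z.2, forall i, diag D (e i),
      forall z, D z -> diag D (f z) &
      forall z z', D z -> D z' -> f z = f z' -> z = z'].

Let good_pairing_on D f : good D f -> pairing_on (diag D) f.
Proof.
case=> sq _ fD finj; split=> [x y Dx Dy|x y x' y' Dx Dy Dx' Dy' exy].
  by apply: fD; apply/sq.
by case: (finj (x, y) (x', y') (proj2 (sq (x, y)) (conj Dx Dy))
          (proj2 (sq (x', y')) (conj Dx' Dy')) exy).
Qed.

Let pairing_on_good B f : (forall i, B (e i)) -> pairing_on B f -> good (B `*` B) f.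
Proof.
move=> Be [fB finj]; rewrite /good /diag; split.
- by move=> [x y]; split=> [[Bx By]|[[Bx _] [By _]]].
- by move=> i; exact: (conj (Be i) (Be i)).
- by move=> [x y] [Bx By]; exact: (conj (fB _ _ Bx By) (fB _ _ Bx By)).
- by move=> [x y] [x' y'] [Bx By] [Bx' By'] /finj; case/(_ Bx By Bx' By') => -> ->.
Qed.

Let good_range : exists f, good [set z | exists i j, z = (e i, e j)] f.
Proof.
pose inv x := if pselect (exists i, e i = x) is left h then sval (cid h) else 0%N.
have invK i : inv (e i) = i.
  rewrite /inv; case: pselect => [h|[]]; last by exists i.
  by case: (cid h) => j /= /einj.
exists (fun z => e (pickle (inv z.1, inv z.2))); split.
- move=> [x y]; split => [[i [j [-> ->]]]|[[i [j [-> _]]] [k [l [-> _]]]]] /=.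
    by split; [exists i, i | exists j, j].
  by exists i, k.
- by move=> i; exists i, i.
- by move=> z _; exists (pickle (inv z.1, inv z.2)), (pickle (inv z.1, inv z.2)).
- move=> [x y] [x' y'] [i [j [-> ->]]] [i' [j' [-> ->]]] /einj.
  by rewrite /= !invK => /(pcan_inj pickleK) [-> ->].
Qed.

Let good_chain (C : set (set (T * T) * (T * T -> T))) : (exists c, C c) ->
  (forall c, C c -> good c.1 c.2) ->
  (forall c c', C c -> C c' -> extends c c' \/ extends c' c) ->
  forall D f, (forall z, D z <-> exists2 c, C c & c.1 z) ->
    (forall c z, C c -> c.1 z -> f z = c.2 z) -> good D f.
Proof.
move=> [c0 Cc0] Cg Ccomp D f HD Hf.
have common z z' c1 c2 : C c1 -> C c2 -> c1.1 z -> c2.1 z' ->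
    exists2 c, C c & c.1 z /\ c.1 z'.
  move=> C1 C2 z1 z2; case: (Ccomp _ _ C1 C2) => [[s _]|[s _]].
    by exists c2 => //; split => //; apply: s.
  by exists c1 => //; split => //; apply: s.
split.
- move=> z; split.
    move=> /HD [c Cc cz]; have [sq _ _ _] := Cg _ Cc.
    by have [h1 h2] := (sq z).1 cz; split; apply/HD; exists c.
  move=> [/HD [c1 C1 z1] /HD [c2 C2 z2]].
  have [c Cc [zc1 zc2]] := common _ _ _ _ C1 C2 z1 z2.
  by have [sq _ _ _] := Cg _ Cc; apply/HD; exists c => //; exact/sq.
- by move=> i; apply/HD; exists c0 => //; have [_ Ce _ _] := Cg _ Cc0; apply: Ce.
- move=> z /HD [c Cc cz]; rewrite (Hf c z Cc cz); apply/HD; exists c => //.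
  by have [_ _ fD _] := Cg _ Cc; apply: fD.
- move=> z z' /HD [c1 C1 z1] /HD [c2 C2 z2].
  have [c Cc [zc1 zc2]] := common _ _ _ _ C1 C2 z1 z2.
  rewrite (Hf c z Cc zc1) (Hf c z' Cc zc2).
  by have [_ _ _ finj] := Cg _ Cc; apply: finj.
Qed.

(* A maximal square [B x B] carrying a pairing into [B] cannot have a complement
   at least as large as [B], otherwise it would extend to [B `|` h @` B]. *)
Lemma nat_inj_sqr_inj : exists p : T * T -> T, injective p.
Proof.
have [f0 g0] := good_range.
have [D [f [fgood fmax]]] := zorn_partial_fun (e 0) g0 good_chain.
have [sq Be _ _] := fgood.
have fP := good_pairing_on fgood.
have e01 : e 0 <> e 1 by move/einj.
have [BcB|[h [hB hinj]]] := injects_into_total (e 0) (e 0) (~` diag D) (diag D).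
  have [phi [phiB phiinj]] := injects_into_setU fP (Be 0) (Be 1) e01 BcB.
  have BBc u : (diag D `|` ~` diag D) u.
    by case: (pselect (diag D u)) => ?; [left|right].
  have Bphi u : diag D (phi u) := phiB _ (BBc u).
  exists (fun z => f (phi z.1, phi z.2)) => -[x y] [x' y'] /=.
  have [_ finj] := fP.
  case/(finj _ _ _ _ (Bphi x) (Bphi y) (Bphi x') (Bphi y')).
  by move=> /(phiinj _ _ (BBc x) (BBc x')) -> /(phiinj _ _ (BBc y) (BBc y')) ->.
have [f' [f'P f'E]] := pairing_on_extend fP (Be 0) (Be 1) e01 hB hinj.
set B' := diag D `|` h @` diag D.
have gB' : good (B' `*` B') f' by apply: pairing_on_good f'P => i; left.
have DB' : extends (D, f) (B' `*` B', f').
  split=> -[x y] /sq [Dx Dy]; first by split; left.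
  by rewrite /= f'E.
case: (hB _ (Be 0)); apply: (fmax _ _ gB' DB' (h (e 0), h (e 0))).
by split; right; exists (e 0).
Qed.

End NatInjSqrInj.

Fixpoint seq_code T (p : T * T -> T) (q : option T -> T) (s : seq T) : T :=
  if s is a :: s' then q (Some (p (a, seq_code p q s'))) else q None.

Lemma nat_inj_seq_inj T (e : nat -> T) : injective e ->
  exists c : seq T -> T, injective c.
Proof.
move=> einj; have [p pinj] := nat_inj_sqr_inj einj.
pose q (o : option T) := if o is Some x then p (e 1, x) else p (e 0, e 0).
have qinj : injective q.
  move=> [x|] [y|] //= /pinj.
  - by case=> ->.
  - by case=> /einj.
  - by case=> /einj.
exists (seq_code p q); elim=> [|a s IH] [|b t] //= H.
- by have := @qinj None (Some _) H.
- by have := @qinj (Some _) None H.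
- by case: (@qinj (Some _) (Some _) H) => /pinj [-> /IH ->].
Qed.

Fixpoint all_in T (A : set T) (s : seq T) : Prop :=
  if s is x :: s' then A x /\ all_in A s' else True.

Lemma all_in_map T U (A : set T) (B : set U) (f : T -> U) s :
  (forall x, A x -> B (f x)) -> all_in A s -> all_in B (map f s).
Proof. by move=> AB; elim: s => //= a s IH [Aa As]; split; [apply: AB | apply: IH]. Qed.

Lemma all_in_cat T (A : set T) s1 s2 :
  all_in A s1 -> all_in A s2 -> all_in A (s1 ++ s2).
Proof. by elim: s1 => //= a s1 IH [Aa As1] As2; split => //; apply: IH. Qed.

Lemma all_in_mapP T (U : eqType) (A : set T) (f : U -> T) s :
  (forall x, x \in s -> A (f x)) -> all_in A (map f s).
Proof.
elim: s => //= a s IH H; split; first by apply: H; rewrite mem_head.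
by apply: IH => x xs; apply: H; rewrite inE xs orbT.
Qed.

Section RealUncountable.
Import cardinality constructive_ereal lebesgue_measure.
Variable R : realType.

Lemma lt_continuum_nat : lt_continuum R [set: nat].
Proof.
move=> [g [ginj _]].
have : countable (`[0%R, 1%R]%classic : set R).
  by apply/countable_injP; exists g => x y _ _; apply: ginj.
move/countable_lebesgue_measure0.
rewrite lebesgue_measure_itv /= lte_fin ltr01 /=.
by rewrite oppr0 adde0 => /eqP; rewrite eqe oner_eq0.
Qed.

End RealUncountable.

Section LtContinuum.
Variable R : realType.

Lemma lt_continuum_sub T (A B : set T) :
  A `<=` B -> lt_continuum R B -> lt_continuum R A.
Proof. by move=> AB sB [f [finj fA]]; apply: sB; exists f; split=> // r; apply: AB. Qed.

Lemma lt_continuum_image T U (A : set T) (g : T -> U) :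
  lt_continuum R A -> lt_continuum R (g @` A).
Proof.
move=> sA [f [finj fA]]; apply: sA.
have pre r : {x | A x /\ g x = f r} by apply: cid; case: (fA r) => x; exists x.
exists (fun r => sval (pre r)); split; last by move=> r; case: (svalP (pre r)).
move=> r r' e; apply: finj.
by case: (svalP (pre r)) => _ <-; case: (svalP (pre r')) => _ <-; rewrite e.
Qed.

Lemma real_pair_inj : exists h : R * R -> R, injective h.
Proof.
apply: (@nat_inj_sqr_inj R (fun n : nat => n%:R)) => m n /eqP.
by rewrite eqr_nat => /eqP.
Qed.

(* A line [y |-> f (h (x, y))] lies in [A] or meets [B]; if it is in [A] for
   some [x] then [R] injects into [A], otherwise choice picks a point in [B]
   on every line. *)
Lemma lt_continuum_setU T (A B : set T) :
  lt_continuum R A -> lt_continuum R B -> lt_continuum R (A `|` B).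
Proof.
move=> sA sB [f [finj fAB]].
have [h hinj] := real_pair_inj.
have [[x Hx]|Hn] := pselect (exists x : R, forall y, A (f (h (x, y)))).
  by apply: sA; exists (fun y => f (h (x, y))); split => // y y' /finj /hinj [].
have H x : exists y, B (f (h (x, y))).
  apply: contra_notP Hn => nB; exists x => y.
  by case: (fAB (h (x, y))) => // b; case: nB; exists y.
apply: sB; exists (fun x => f (h (x, sval (cid (H x))))); split.
  by move=> x x' /finj /hinj [].
by move=> x; exact: (svalP (cid (H x))).
Qed.

Lemma lt_continuum_seq_infinite T (A : set T) (e : nat -> T) :
  injective e -> (forall i, A (e i)) -> lt_continuum R A ->
  lt_continuum R (fun z : nat * seq T => all_in A z.2).
Proof.
move=> einj eA sA [F [Finj FA]].
pose TA := {x : T | A x}.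
pose e' i : TA := exist _ (e i) (eA i).
have e'inj : injective e' by move=> i j /(congr1 sval) /einj.
have [c cinj] := nat_inj_seq_inj e'inj.
pose toTA x : TA := if pselect (A x) is left h then exist _ x h else e' 0%N.
have toTAK x : A x -> sval (toTA x) = x by rewrite /toTA; case: pselect.
have mapinj s1 s2 :
    all_in A s1 -> all_in A s2 -> map toTA s1 = map toTA s2 -> s1 = s2.
  elim: s1 s2 => [|a s1 IH] [|b s2] //= [Aa As1] [Ab As2] [hab hs].
  by rewrite -(toTAK a) // -(toTAK b) // hab (IH s2).
apply: sA; exists (fun r => sval (c (e' (F r).1 :: map toTA (F r).2))).
split; last first.
  by move=> r; exact: (svalP (c _)).
move=> r r' /(eq_sig_hprop (fun x => @Prop_irrelevance (A x))) /cinj [/einj h1 h2].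
apply: Finj; move: (FA r) (FA r') h1 h2.
by case: (F r) (F r') => [n s] [n' s'] /= As As' -> /(mapinj _ _ As As') ->.
Qed.

Lemma lt_continuum_seq T (A : set T) : lt_continuum R A ->
  lt_continuum R (fun z : nat * seq T => all_in A z.2).
Proof.
move=> sA [F [Finj FA]].
pose A' : set (T + nat) := inl @` A `|` range inr.
have sA' : lt_continuum R A'.
  apply: lt_continuum_setU; first exact: lt_continuum_image sA.
  by apply: lt_continuum_image; exact: lt_continuum_nat.
apply: (lt_continuum_seq_infinite (e := inr) _ _ sA'); first by move=> m n [].
  by move=> n; right; exists n.
exists (fun r => ((F r).1, map inl (F r).2)); split.
  move=> r r' [h1 /(inj_map (@inl_inj T nat)) h2]; apply: Finj.
  by move: h1 h2; case: (F r) (F r') => [? ?] [? ?] /= -> ->.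
by move=> r; apply: all_in_map (FA r) => x Ax; left; exists x.
Qed.

End LtContinuum.

Section PartialEvaluation.
Variable R : comNzRingType.

Definition mdrop n (k : 'I_n.+1) (m : 'X_{1..n.+1}) : 'X_{1..n} :=
  [multinom m (lift k i) | i < n].

Definition minsert n (k : 'I_n.+1) (j : nat) (mu : 'X_{1..n}) : 'X_{1..n.+1} :=
  [multinom if unlift k i is Some i' then mu i' else j | i < n.+1].

Lemma eq_minsert n k j (mu : 'X_{1..n}) (m : 'X_{1..n.+1}) :
  (m == minsert k j mu) = (m k == j) && (mdrop k m == mu).
Proof.
apply/eqP/andP => [->|[/eqP mk /eqP <-]].
  rewrite mnmE unlift_none; split=> //; apply/eqP/mnmP => i.
  by rewrite !mnmE liftK.
by apply/mnmP => i; rewrite mnmE; case: unliftP => [i' ->|->]; rewrite ?mnmE.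
Qed.

Lemma minsert_mdrop n k (m : 'X_{1..n.+1}) : minsert k (m k) (mdrop k m) = m.
Proof. by apply/esym/eqP; rewrite eq_minsert !eqxx. Qed.

Definition mslice n (Q : {mpoly R[n.+1]}) (k : 'I_n.+1) (j : nat) : {mpoly R[n]} :=
  \sum_(m <- msupp Q | m k == j) Q@_m *: 'X_[mdrop k m].

Lemma mcoeff_mslice n (Q : {mpoly R[n.+1]}) k j mu :
  (mslice Q k j)@_mu = Q@_(minsert k j mu).
Proof.
rewrite [in RHS](mpolyE Q) !raddf_sum /= big_mkcond /=; apply: eq_bigr => m _.
rewrite !mcoeffZ !mcoeffX eq_minsert.
by case: (m k == j); rewrite ?mulr0.
Qed.

Lemma mslice_neq0 n (Q : {mpoly R[n.+1]}) k m :
  m \in msupp Q -> mslice Q k (m k) != 0.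
Proof.
rewrite mcoeff_msupp => Qm; apply: contraNneq Qm => /(congr1 (mcoeff (mdrop k m))).
by rewrite mcoeff_mslice minsert_mdrop mcoeff0 => ->.
Qed.

Definition mpeval n (Q : {mpoly R[n.+1]}) (k : 'I_n.+1) (v : 'I_n -> R) : {poly R} :=
  \poly_(j < msize Q) (mslice Q k j).@[v].

Lemma msupp_exp_lt n (Q : {mpoly R[n]}) (m : 'X_{1..n}) k :
  m \in msupp Q -> (m k < msize Q)%N.
Proof.
move=> mQ; apply: leq_ltn_trans (msize_mdeg_lt mQ).
by rewrite mdegE (bigD1 k) //= leq_addr.
Qed.

Lemma meval_mslice n (Q : {mpoly R[n.+1]}) k j (v : 'I_n -> R) :
  (mslice Q k j).@[v] =
    \sum_(m <- msupp Q | m k == j) Q@_m * \prod_(i < n) v i ^+ m (lift k i).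
Proof.
rewrite /mslice (big_morph _ (mevalD v) (meval0 v)); apply: eq_bigr => m _.
by rewrite mevalZ mevalX; congr (_ * _); apply: eq_bigr => i _; rewrite mnmE.
Qed.

Lemma meval_mpeval n (Q : {mpoly R[n.+1]}) k (v : 'I_n.+1 -> R) :
  Q.@[v] = (mpeval Q k (fun i => v (lift k i))).[v k].
Proof.
rewrite horner_poly mevalE.
symmetry; under eq_bigr do rewrite meval_mslice big_distrl /= big_mkcond /=.
rewrite exchange_big /= big_seq [RHS]big_seq; apply: eq_bigr => m mQ.
rewrite (bigD1_ord k) //= -big_mkcond /=.
rewrite (big_pred1 (Ordinal (msupp_exp_lt k mQ))); last by move=> j /=; rewrite eq_sym.
by rewrite /= -mulrA; congr (_ * _); rewrite mulrC.
Qed.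

Lemma meval_nvar0_neq0 (Q : {mpoly R[0]}) v : Q != 0 -> Q.@[v] != 0.
Proof.
move=> Qnz; rewrite (nvar0_mpolyC Q) mevalC.
by apply: contraNneq Qnz => Q0; rewrite (nvar0_mpolyC Q) Q0 mpolyC0.
Qed.

Lemma mpoly_subC_neq0 n (p : {mpoly R[n]}) c :
  p != 0 -> p@_0%MM = 0 -> p - c%:MP != 0.
Proof.
move=> pnz p0; apply: contraNneq pnz => /eqP; rewrite subr_eq0 => /eqP pc.
by move: p0; rewrite pc mcoeffC eqxx mulr1 => ->; rewrite mpolyC0.
Qed.

End PartialEvaluation.

Lemma chain_cover_seq (T : eqType) (F : set (set T)) : total_on F subset ->
  forall l : seq T, (forall x, x \in l -> exists2 S, F S & S x) -> l != [::] ->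
  exists S, F S /\ forall x, x \in l -> S x.
Proof.
move=> Ftot; elim=> [//|a l IH] Hl _.
have [Sa FSa Saa] := Hl a (mem_head _ _).
case: (eqVneq l [::]) => [->|lnz].
  by exists Sa; split => // x; rewrite inE => /eqP ->.
have [S [FS HS]] := IH (fun x xl => Hl x (@mem_behead _ (a :: l) x xl)) lnz.
case: (Ftot _ _ FSa FS) => [sub|sub].
  by exists S; split => // x; rewrite inE => /orP [/eqP ->|/HS]; [apply: sub|].
by exists Sa; split => // x; rewrite inE => /orP [/eqP ->|/HS /sub].
Qed.

Section Independence.
Variable R : realType.

Definition coefs_in (K : set R) n (Q : {mpoly R[n]}) :=
  forall m, Q@_m != 0 -> K Q@_m.

Definition indep_over (K S : set R) :=
  forall n (Q : {mpoly R[n]}) (v : 'I_n -> R),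
    Q != 0 -> coefs_in K Q -> injective v -> (forall i, S (v i)) -> Q.@[v] != 0.

Lemma coefs_in_mslice K n (Q : {mpoly R[n.+1]}) k j :
  coefs_in K Q -> coefs_in K (mslice Q k j).
Proof. by move=> KQ mu; rewrite mcoeff_mslice; exact: KQ. Qed.

Lemma indep_over_bigcup K (F : set (set R)) : (forall S, F S -> indep_over K S) ->
  total_on F subset -> indep_over K (\bigcup_(S in F) S).
Proof.
move=> FI Ftot [|n] Q v Qnz KQ vinj vS; first exact: meval_nvar0_neq0.
have [||S [FS HS]] := @chain_cover_seq _ F Ftot [seq v i | i <- enum 'I_n.+1].
- by move=> x /mapP [i _ ->]; apply: vS.
- by rewrite -size_eq0 size_map size_enum_ord.
by apply: (FI S FS) => // i; apply: HS; apply: map_f; rewrite mem_enum.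
Qed.

(* The data of a univariate polynomial [mpeval Q k v]: the support of [Q] and [k]
   form a countable shape, the coefficients of [Q] followed by the values [v]
   form a finite sequence of reals. *)
Definition shape := {n : nat & (seq 'X_{1..n.+1} * 'I_n.+1)%type}.

Definition shape_poly (d : shape) (s : seq R) : {poly R} :=
  let: existT n (ms, k) := d in
  mpeval (\sum_(i < size ms) s`_i *: 'X_[nth 0%MM ms i]) k (fun i => s`_(size ms + i)).

Definition root_over (A : set R) (t : R) :=
  exists d s, all_in A s /\ shape_poly d s != 0 /\ root (shape_poly d s) t.

Lemma lt_continuum_root_over A : lt_continuum R A -> lt_continuum R (root_over A).
Proof.
move=> sA.
pose dec (z : nat * seq R) :=
  if unpickle z.1 is Some (d, j) then (polyrcf.rootsR (shape_poly d z.2))`_j else 0.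
apply: lt_continuum_sub (lt_continuum_image (g := dec) (lt_continuum_seq sA)).
move=> t [d [s [As [pnz pt]]]].
have tr : t \in polyrcf.rootsR (shape_poly d s).
  by rewrite -(polyrcf.roots_on_rootsR pnz) pt andbT.
exists (pickle (d, index t (polyrcf.rootsR (shape_poly d s))), s) => //.
by rewrite /dec /= pickleK nth_index.
Qed.

Lemma root_over_mpeval K S n (Q : {mpoly R[n.+1]}) k (v : 'I_n -> R) t :
  coefs_in K Q -> (forall i, S (v i)) ->
  mpeval Q k v != 0 -> root (mpeval Q k v) t -> root_over (S `|` K) t.
Proof.
move=> KQ vS pnz pt.
pose s := [seq Q@_m | m <- msupp Q] ++ [seq v i | i <- enum 'I_n].
have Ep : mpeval Q k v = shape_poly (existT _ n (msupp Q, k)) s.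
  rewrite /shape_poly; congr mpeval.
    rewrite [LHS]mpolyE (big_nth 0%MM) big_mkord; apply: eq_bigr => i _.
    have hi : (i < size [seq Q@_m | m <- msupp Q])%N by rewrite size_map.
    by rewrite /s nth_cat hi (nth_map 0%MM).
  apply: funext => i; rewrite /s nth_cat !size_map ltnNge leq_addr /= addKn.
  by rewrite (nth_map i) ?size_enum_ord // nth_ord_enum.
rewrite Ep in pnz pt; exists (existT _ n (msupp Q, k)), s; split => //.
apply: all_in_cat; apply: all_in_mapP => x xs; last by left.
by right; apply: KQ; rewrite -mcoeff_msupp.
Qed.

Lemma mpeval_neq0 K S n (Q : {mpoly R[n.+1]}) k (v : 'I_n -> R) :
  indep_over K S -> Q != 0 -> coefs_in K Q -> injective v -> (forall i, S (v i)) ->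
  mpeval Q k v != 0.
Proof.
move=> IS Qnz KQ vinj vS.
have [m mQ] : exists m, m \in msupp Q.
  case E: (msupp Q) => [|m ?]; last by exists m; rewrite mem_head.
  by move/eqP: E; rewrite msupp_eq0 (negbTE Qnz).
apply/eqP => /(congr1 (fun p : {poly R} => p`_(m k))).
rewrite coef_poly msupp_exp_lt // coef0 => /eqP; apply/negP.
by apply: (IS _ _ _ (mslice_neq0 k mQ)) vinj vS; exact: coefs_in_mslice.
Qed.

(* If one of the points is the new element [t], view [Q] as a polynomial in that
   variable: its coefficients are nonzero at the other points by independence of
   [S], and [t] is not a root of it. *)
Lemma indep_over_setU1 K S t : indep_over K S -> ~ root_over (S `|` K) t ->
  indep_over K (S `|` [set t]).
Proof.
move=> IS nBt n Q v Qnz KQ vinj vS.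
have [Sv|[k vk]] : (forall i, S (v i)) \/ exists k, v k = t.
- have [|/existsNP [k nSk]] := pselect (forall i, S (v i)); first by left.
  by right; exists k; case: (vS k).
- exact: IS.
move: Q v k vinj vS Qnz KQ vk; case: n => [|n] Q v k; first by case: k.
move=> vinj vS Qnz KQ vk.
pose v' i := v (lift k i).
have v'inj : injective v' by move=> i j /vinj /lift_inj.
have v'S i : S (v' i).
  case: (vS (lift k i)) => // e; case/eqP: (neq_lift k i).
  by apply: vinj; rewrite vk e.
rewrite (meval_mpeval Q k) vk -/v'.
apply/negP => pt; apply: nBt.
exact: root_over_mpeval KQ v'S (mpeval_neq0 k IS Qnz KQ v'inj v'S) pt.
Qed.

Lemma exists_indep_continuum K : lt_continuum R K ->
  exists y : R -> R, injective y /\ indep_over K (range y).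
Proof.
move=> sK.
have [S [IS Smax]] := Zorn_bigcup (@indep_over_bigcup K).
have nsS : ~ lt_continuum R S.
  move=> sS; have sB := lt_continuum_root_over (lt_continuum_setU sS sK).
  have [t [nSt nBt]] : exists t, ~ S t /\ ~ root_over (S `|` K) t.
    apply: contra_notP (lt_continuum_setU sS sB) => H; exists id; split => // r.
    by apply: contra_notP H => h; exists r; split => ?; apply: h; [left|right].
  apply: (Smax (S `|` [set t])); last exact: indep_over_setU1.
  split; first by move=> x Sx; left.
  by move=> /(_ t (or_intror erefl)).
have [y [yinj yS]] : exists y : R -> R, injective y /\ forall r, S (y r).
  by apply: contra_notP nsS => H [f [finj fS]]; apply: H; exists f.
exists y; split => // n Q v Qnz KQ vinj vy.
by apply: IS => // i; have [r _ <-] := vy i; exact: yS.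
Qed.

Lemma lt_continuum_coefs (Fam : anypoly R -> Prop) : lt_continuum R Fam ->
  lt_continuum R [set c | exists2 P, Fam P & exists m, c = (projT2 P)@_m].
Proof.
move=> sFam.
pose dec (z : nat * seq (anypoly R)) :=
  if z is (i.+1, P :: _) then (projT2 P)@_(nth 0%MM (msupp (projT2 P)) i) else 0.
apply: lt_continuum_sub (lt_continuum_image (g := dec) (lt_continuum_seq sFam)).
move=> _ [[n Q] FQ [m ->]] /=.
have [Qm0|Qm] := eqVneq Q@_m 0; first by rewrite Qm0; exists (0%N, [::]).
exists ((index m (msupp Q)).+1, [:: existT _ n Q]) => //.
by rewrite /dec /= nth_index // mcoeff_msupp.
Qed.

End Independence.

Unset Implicit Arguments.

Theorem lemma2p5 (R : realType) (Fam : anypoly R -> Prop) (X : R -> Prop)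
  (HFam : forall P : anypoly R, Fam P ->
            projT2 P != 0 /\ (projT2 P)@_0%MM = 0)
  (HFc : lt_continuum R Fam) (HXc : lt_continuum R X) :
  exists y : R -> R, injective y /\
    forall (n : nat) (p : {mpoly R[n]}) (xi : 'I_n -> R),
      (0 < n)%N -> Fam (existT _ n p) -> injective xi ->
      ~ X p.@[fun i => y (xi i)].
Proof.
pose K := [set c | exists2 P, Fam P & exists m, c = (projT2 P)@_m]
  `|` [set - x | x in X].
have sK : lt_continuum R K.
  apply: lt_continuum_setU; first exact: lt_continuum_coefs.
  exact: lt_continuum_image.
have [y [yinj yK]] := exists_indep_continuum sK.
exists y; split => // n p xi _ Fp xiinj Xx.
have [pnz p0] := HFam _ Fp.
set x := p.@[_] in Xx.
have /negP[] : (p - x%:MP).@[fun i => y (xi i)] != 0.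
  apply: yK => [||i j /yinj /xiinj //|i]; last by exists (xi i).
  - exact: mpoly_subC_neq0.
  move=> m; rewrite mcoeffB mcoeffC; case: (eqVneq m 0%MM) => [->|_].
    by rewrite mulr1 p0 sub0r => _; right; exists x.
  by rewrite mulr0 subr0 => _; left; exists (existT _ n p) => //; exists m.
by rewrite mevalB mevalC subrr.
Qed.
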